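(* Let $p(x)\in\mathbb{C}((x))$ and set $\phi(x,z)=e^{zp(x)\frac{d}{dx}}x=\sum_{n\ge0}\frac{z^n}{n!}\left(p(x)\frac{d}{dx}\right)^nx\in\mathbb{C}((x))[[z]]$. Then $\phi(x,z)$ is an associate of the additive formal group $F(x,y)=x+y$. Moreover, every associate $\phi(x,z)$ of $F(x,y)=x+y$ is of this form, with $p(x)$ uniquely determined (namely $p(x)=\frac{\partial\phi}{\partial z}(x,0)$).
   Context: An associate of the one-dimensional additive formal group $F(x,y)=x+y$ is a formal series $\phi(x,z)\in\mathbb{C}((x))[[z]]$ such that $\phi(x,0)=x$ and $\phi(\phi(x,x_2),x_0)=\phi(x,x_0+x_2)$, where, writing $\phi(x,z)=\sum_{n\ge0}f_n(x)z^n$, $\phi(\phi(x,x_2),x_0):=\sum_n f_n(\phi(x,x_2))x_0^n\in\mathbb{C}((x))[[x_0,x_2]]$ (for $f\in\mathbb{C}((x))$, $f(\phi(x,x_2))$ is defined using that $\phi(x,x_2)$ is a unit of $\mathbb{C}((x))[[x_2]]$). *)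

(* Formal Laurent series over a field K are represented by
   their coefficient functions  int -> K  together with the predicate
   [is_laurent] (support bounded below).  Elements of K((x))[[z]] are
   sequences  nat -> (int -> K)  of Laurent series (coefficients of z^n). *)
From HB Require Import structures.
From mathcomp Require Import all_boot all_order all_algebra.
From mathcomp.real_closed Require Import complex.
From mathcomp Require Import reals.
From Stdlib Require Import ClassicalEpsilon.

Set Implicit Arguments.
Unset Strict Implicit.
Unset Printing Implicit Defensive.

Import Order.TTheory GRing.Theory Num.Theory.
Local Open Scope ring_scope.

Section Laurent.
Variable K : fieldType.

Definition laurent := int -> K.

Definition is_laurent (f : laurent) : Prop :=
  exists N : int, forall n : int, n < N -> f n = 0.

Definition lbound (f : laurent) : int :=
  epsilon (inhabits 0) (fun N : int => forall n : int, n < N -> f n = 0).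

Definition lorder (f : laurent) : int :=
  epsilon (inhabits 0) (fun v : int => f v != 0 /\ forall n : int, n < v -> f n = 0).

Definition lzero : laurent := fun _ => 0.
Definition lone : laurent := fun n => if n == 0 then 1 else 0.
Definition lx : laurent := fun n => if n == 1 then 1 else 0.
Definition ladd (f g : laurent) : laurent := fun n => f n + g n.
Definition lopp (f : laurent) : laurent := fun n => - f n.
Definition lscale (c : K) (f : laurent) : laurent := fun n => c * f n.

Definition lmul (f g : laurent) : laurent := fun n =>
  let a := lbound f in let b := lbound g in
  if a + b <= n then
    \sum_(i < (absz (n - a - b)%R).+1) f (a + i%:Z) * g (n - a - i%:Z)
  else 0.

Definition lderiv (f : laurent) : laurent := fun n => (n + 1)%:~R * f (n + 1).

(* inverse of a power series u with u 0 != 0: first n+1 coefficients *)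
Fixpoint ps_inv_seq (u : nat -> K) (n : nat) : seq K :=
  match n with
  | 0%N => [:: (u 0%N)^-1]
  | n'.+1 => let s := ps_inv_seq u n' in
      rcons s (- (u 0%N)^-1 * \sum_(k < n'.+1) u k.+1 * nth 0 s (n' - k))
  end.
Definition ps_inv (u : nat -> K) (i : nat) : K := nth 0 (ps_inv_seq u i) i.

Definition linv (g : laurent) : laurent := fun n =>
  let v := lorder g in
  if 0 <= n + v then ps_inv (fun i => g (v + i%:Z)) (absz (n + v)) else 0.

Definition lser := nat -> laurent.

Definition sone : lser := fun j => if j == 0%N then lone else lzero.
Definition smul (psi chi : lser) : lser := fun j =>
  \big[ladd/lzero]_(i < j.+1) lmul (psi i) (chi (j - i)%N).

(* inverse in K((x))[[z]] of a series whose constant term is a unit *)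
Fixpoint sinv_seq (psi : lser) (n : nat) : seq laurent :=
  match n with
  | 0%N => [:: linv (psi 0%N)]
  | n'.+1 => let s := sinv_seq psi n' in
      rcons s (lopp (lmul (linv (psi 0%N))
        (\big[ladd/lzero]_(k < n'.+1) lmul (psi k.+1) (nth lzero s (n' - k)))))
  end.
Definition sinv (psi : lser) : lser := fun j => nth lzero (sinv_seq psi j) j.

Definition spow (psi : lser) (m : int) : lser :=
  if 0 <= m then iter (absz m) (smul psi) sone
  else iter (absz m) (smul (sinv psi)) sone.

(* partial sums  sum_{-M <= m <= M} f_m psi^m  of f(psi), f = sum_m f_m x^m *)
Definition psum (f : laurent) (psi : lser) (M : nat) : lser := fun j k =>
  \sum_(i < (2 * M).+1) f (i%:Z - M%:Z) * spow psi (i%:Z - M%:Z) j k.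

(* subst_eq f psi chi : the series f(psi) (defined as sum_m f_m psi^m, a
   convergent sum) equals chi, i.e. each coefficient of the partial sums
   eventually equals the corresponding coefficient of chi *)
Definition subst_eq (f : laurent) (psi chi : lser) : Prop :=
  forall (j : nat) (k : int), exists M0 : nat, forall M : nat,
    (M0 <= M)%N -> psum f psi M j k = chi j k.

(* phi is an associate of the additive formal group F(x,y) = x + y:
   phi in K((x))[[z]], phi(x,0) = x, and phi(phi(x,x2),x0) = phi(x,x0+x2).
   Comparing coefficients of x0^n: f_n(phi(x,x2)) = sum_m C(n+m,n) f_{n+m} x2^m,
   the coefficient of x0^n in phi(x,x0+x2) = sum_k f_k (x0+x2)^k. *)
Definition associate (phi : lser) : Prop :=
  (forall n, is_laurent (phi n)) /\
  (forall k, phi 0%N k = lx k) /\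
  (forall n : nat, subst_eq (phi n) phi
      (fun m k => ('C(n + m, n))%:R * phi (n + m)%N k)).

Definition phi_exp (p : laurent) : lser := fun n =>
  lscale (n`!%:R)^-1 (iter n (fun g => lmul p (lderiv g)) lx).

End Laurent.

From HB Require Import structures.
From mathcomp Require Import all_boot all_order all_algebra.
From mathcomp.real_closed Require Import complex.
From mathcomp Require Import reals.
From mathcomp Require Import zify ring.
From Stdlib Require Import FunctionalExtensionality ClassicalEpsilon.

(* For the derivation D = p d/dx of K((x)), the series
   e^{zD} h = sum_j z^j/j! D^j h is multiplicative in h by the Leibniz rule.
   Hence e^{zD} (x^m) = (e^{zD} x)^m for every m in Z, and substituting
   phi := e^{zD} x into a Laurent series f gives f(phi) = e^{zD} f.  With
   f = f_n = D^n x / n! this is sum_m z^m/m! D^(n+m) x / n!, which is the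
   associate identity.  Conversely, for an associate phi the z-coefficient of
   f_n(phi) only depends on phi modulo z^2, where phi agrees with e^{zD} x for
   p := f_1, so it is D f_n; the associate identity identifies it with
   (n+1) f_(n+1), and phi = e^{zD} x follows by induction on n. *)

Set Implicit Arguments.
Unset Strict Implicit.
Unset Printing Implicit Defensive.
Import Order.TTheory GRing.Theory Num.Theory.
Local Open Scope ring_scope.

Section LaurentArithmetic.
Variable K : fieldType.
Implicit Types (f g h : laurent K).

Definition vanishes_below f (A : int) := forall n, n < A -> f n = 0.

Lemma lbound_vanishes f : is_laurent f -> vanishes_below f (lbound f).
Proof. by move=> lf; apply: epsilon_spec. Qed.

Lemma vanishes_below_laurent f A : vanishes_below f A -> is_laurent f.
Proof. by exists A. Qed.

Lemma vanishes_below_le f A B : vanishes_below f A -> B <= A -> vanishes_below f B.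
Proof. move=> hA hBA n hn; apply: hA; lia. Qed.

Definition zsum (lo hi : int) (F : int -> K) :=
  if lo <= hi then \sum_(i < (absz (hi - lo)).+1) F (lo + i%:Z) else 0.

Lemma zsum_widen lo hi lo' hi' F :
  (forall t, t < lo \/ hi < t -> F t = 0) -> lo' <= lo -> hi <= hi' ->
  zsum lo' hi' F = zsum lo hi F.
Proof.
move=> HF h1 h2; rewrite /zsum.
case: (lerP lo hi) => hlh; last first.
  case: ifP => _ //; rewrite big1 // => i _; apply: HF; lia.
have -> : (lo' <= hi') = true by apply/idP; lia.
set d := absz (lo - lo'); set L := absz (hi - lo); set e := absz (hi' - hi).
have -> : (absz (hi' - lo')).+1 = (d + L.+1 + e)%N by rewrite /d /L /e; lia.
have sum0 a b : (forall i, (a <= i < b)%N -> F (lo' + i%:Z) = 0) ->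
    \sum_(a <= i < b) F (lo' + i%:Z) = 0.
  by move=> H; rewrite big_nat_cond big1 // => i /andP[hab _]; apply: H.
rewrite -(big_mkord xpredT (fun i : nat => F (lo' + i%:Z))).
rewrite (big_cat_nat _ (n := d)) /=; [|lia..].
rewrite (big_cat_nat _ (m := d) (n := (d + L.+1)%N)) /=; [|lia..].
rewrite sum0 ?add0r; last by move=> i hab; apply: HF; lia.
rewrite [X in _ + X]sum0 ?addr0; last by move=> i hab; apply: HF; lia.
rewrite -{1}(add0n d) big_addn addKn big_mkord.
by apply: eq_bigr => i _; congr F; rewrite /d; lia.
Qed.

Lemma zsum_eq lo1 hi1 lo2 hi2 F :
  (forall t, t < lo1 \/ hi1 < t -> F t = 0) ->
  (forall t, t < lo2 \/ hi2 < t -> F t = 0) ->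
  zsum lo1 hi1 F = zsum lo2 hi2 F.
Proof.
move=> H1 H2.
have H t : t < Num.max lo1 lo2 \/ Num.min hi1 hi2 < t -> F t = 0.
  rewrite lt_max gt_min => -[/orP[]|/orP[]] h.
  - by apply: H1; left.
  - by apply: H2; left.
  - by apply: H1; right.
  - by apply: H2; right.
rewrite (zsum_widen H) ?le_max ?ge_min ?lexx //.
by rewrite (zsum_widen H) ?le_max ?ge_min ?lexx ?orbT.
Qed.

Lemma lmul_zsum f g A B : is_laurent f -> is_laurent g ->
  vanishes_below f A -> vanishes_below g B ->
  forall n, lmul f g n = zsum A (n - B) (fun t => f t * g (n - t)).
Proof.
move=> lf lg hA hB n; have ha := lbound_vanishes lf; have hb := lbound_vanishes lg.
have -> : lmul f g n = zsum (lbound f) (n - lbound g) (fun t => f t * g (n - t)).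
  rewrite /lmul /zsum.
  have -> : (lbound f + lbound g <= n) = (lbound f <= n - lbound g).
    by apply/idP/idP => h; lia.
  case: ifP => // _.
  rewrite [(n - _ - _)%R]addrAC.
  by apply: eq_bigr => i _; rewrite opprD addrA.
apply: zsum_eq => t [] h.
- by rewrite ha // mul0r.
- by rewrite hb ?mulr0 //; lia.
- by rewrite hA // mul0r.
- by rewrite hB ?mulr0 //; lia.
Qed.

Lemma lmul_coef f g A B : is_laurent f -> is_laurent g ->
  vanishes_below f A -> vanishes_below g B ->
  forall i : nat, lmul f g (A + B + i%:Z) =
    \sum_(j < i.+1) f (A + j%:Z) * g (B + (i - j)%N%:Z).
Proof.
move=> lf lg hA hB i; rewrite (lmul_zsum lf lg hA hB) /zsum.
have -> : (A <= A + B + i%:Z - B) = true by apply/idP; lia.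
have -> : absz (A + B + i%:Z - B - A)%R = i by lia.
by apply: eq_bigr => j _; congr (_ * g _); have := ltn_ord j; lia.
Qed.

Lemma lmul_vanishes f g A B : is_laurent f -> is_laurent g ->
  vanishes_below f A -> vanishes_below g B -> vanishes_below (lmul f g) (A + B).
Proof.
move=> lf lg hA hB n hn; rewrite (lmul_zsum lf lg hA hB) /zsum.
by case: ifP => // h; lia.
Qed.

Lemma lmul_laurent f g : is_laurent f -> is_laurent g -> is_laurent (lmul f g).
Proof.
move=> lf lg; apply: vanishes_below_laurent.
exact: lmul_vanishes (lbound_vanishes lf) (lbound_vanishes lg).
Qed.

Lemma laurent_eq_from (u v : laurent K) C :
  vanishes_below u C -> vanishes_below v C ->
  (forall i : nat, u (C + i%:Z) = v (C + i%:Z)) -> u = v.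
Proof.
move=> hu hv H; apply: functional_extensionality => n.
case: (ltrP n C) => hn; first by rewrite hu ?hv.
have -> : n = C + (absz (n - C)%R)%:Z by lia.
exact: H.
Qed.

Definition lmono (m : int) : laurent K := fun n => if n == m then 1 else 0.

Lemma lmono_vanishes m : vanishes_below (lmono m) m.
Proof. by move=> n hn; rewrite /lmono; case: eqP => // e; lia. Qed.

Lemma lmono_laurent m : is_laurent (lmono m).
Proof. by exists m; apply: lmono_vanishes. Qed.

Lemma lxE : lx K = lmono 1. Proof. by []. Qed.
Lemma loneE : lone K = lmono 0. Proof. by []. Qed.

Lemma ladd_vanishes f g A :
  vanishes_below f A -> vanishes_below g A -> vanishes_below (ladd f g) A.
Proof. by move=> hf hg n hn; rewrite /ladd hf ?hg ?addr0. Qed.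

Lemma ladd_laurent f g : is_laurent f -> is_laurent g -> is_laurent (ladd f g).
Proof.
move=> [A hA] [B hB]; exists (Num.min A B) => n.
by rewrite lt_min => /andP[hnA hnB]; rewrite /ladd hA ?hB ?addr0.
Qed.

Lemma lscale_vanishes c f A : vanishes_below f A -> vanishes_below (lscale c f) A.
Proof. by move=> hf n hn; rewrite /lscale hf ?mulr0. Qed.

Lemma lscale_laurent c f : is_laurent f -> is_laurent (lscale c f).
Proof. by move=> [A hA]; exists A; apply: lscale_vanishes. Qed.

Lemma lzero_laurent : is_laurent (lzero K).
Proof. by exists 0. Qed.

Lemma lmulC f g : is_laurent f -> is_laurent g -> lmul f g = lmul g f.
Proof.
move=> lf lg; have ha := lbound_vanishes lf; have hb := lbound_vanishes lg.
set a := lbound f in ha *; set b := lbound g in hb *.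
apply: (@laurent_eq_from _ _ (a + b)); first exact: lmul_vanishes.
  by rewrite addrC; apply: lmul_vanishes.
move=> i; rewrite (lmul_coef lf lg ha hb) [a + b]addrC (lmul_coef lg lf hb ha).
rewrite (reindex_inj rev_ord_inj) /=; apply: eq_bigr => j _.
by rewrite mulrC; congr (g _ * f _); have := ltn_ord j; rewrite /= ?subSS; lia.
Qed.

(* Up to degree i the coefficients are those of products of the truncated
   polynomials, for which associativity is known. *)
Lemma lmulA f g h : is_laurent f -> is_laurent g -> is_laurent h ->
  lmul (lmul f g) h = lmul f (lmul g h).
Proof.
move=> lf lg lh.
have ha := lbound_vanishes lf; have hb := lbound_vanishes lg.
have hc := lbound_vanishes lh.
set a := lbound f in ha *; set b := lbound g in hb *; set c := lbound h in hc *.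
have lfg := lmul_laurent lf lg; have lgh := lmul_laurent lg lh.
have sfg := lmul_vanishes lf lg ha hb; have sgh := lmul_vanishes lg lh hb hc.
apply: (@laurent_eq_from _ _ (a + b + c)); first exact: lmul_vanishes.
  by rewrite -addrA; apply: lmul_vanishes.
move=> i; pose P (u : laurent K) (s : int) := \poly_(k < i.+1) u (s + k%:Z).
have coefP u v s t : is_laurent u -> is_laurent v ->
    vanishes_below u s -> vanishes_below v t -> forall j : nat, (j <= i)%N ->
    lmul u v (s + t + j%:Z) = (P u s * P v t)`_j.
  move=> lu lv hu hv j hj; rewrite (lmul_coef lu lv hu hv) coefM.
  apply: eq_bigr => l _; rewrite !coef_poly; have hl := ltn_ord l.
  have -> : (l < i.+1)%N by lia.
  by have -> : (j - l < i.+1)%N by lia.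
have truncP u v s t : is_laurent u -> is_laurent v ->
    vanishes_below u s -> vanishes_below v t ->
    P (lmul u v) (s + t) = take_poly i.+1 (P u s * P v t).
  move=> lu lv hu hv; apply/polyP => j; rewrite coef_take_poly coef_poly.
  by case: ifP => hj //; rewrite coefP //; lia.
rewrite (coefP _ _ _ _ lfg lh sfg hc i (leqnn i)).
rewrite -[a + b + c]addrA (coefP _ _ _ _ lf lgh ha sgh i (leqnn i)).
rewrite (truncP _ _ _ _ lf lg ha hb) (truncP _ _ _ _ lg lh hb hc).
rewrite !coefM; transitivity (((P f a * P g b) * P h c)`_i).
  rewrite coefM; apply: eq_bigr => j _; rewrite coef_take_poly.
  by rewrite ltn_ord.
rewrite -mulrA coefM; apply: eq_bigr => j _; rewrite coef_take_poly.
by have -> : (i - j < i.+1)%N by lia.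
Qed.

Lemma lmulDr f g h : is_laurent f -> is_laurent g -> is_laurent h ->
  lmul f (ladd g h) = ladd (lmul f g) (lmul f h).
Proof.
move=> lf lg lh; have ha := lbound_vanishes lf.
set a := lbound f in ha *; set B := Num.min (lbound g) (lbound h).
have hb : vanishes_below g B.
  by apply: vanishes_below_le (lbound_vanishes lg) _; rewrite ge_min lexx.
have hc : vanishes_below h B.
  by apply: vanishes_below_le (lbound_vanishes lh) _; rewrite ge_min lexx orbT.
have lgh := ladd_laurent lg lh; have hgh := ladd_vanishes hb hc.
apply: (@laurent_eq_from _ _ (a + B)).
- exact: lmul_vanishes.
- by apply: ladd_vanishes; apply: lmul_vanishes.
move=> i; rewrite (lmul_coef lf lgh ha hgh) /ladd.
rewrite (lmul_coef lf lg ha hb) (lmul_coef lf lh ha hc) -big_split /=.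
by apply: eq_bigr => j _; rewrite mulrDr.
Qed.

Lemma lmulZl c f g : is_laurent f -> is_laurent g ->
  lmul (lscale c f) g = lscale c (lmul f g).
Proof.
move=> lf lg; have ha := lbound_vanishes lf; have hb := lbound_vanishes lg.
have lcf := lscale_laurent c lf; have hca := lscale_vanishes c ha.
apply: (@laurent_eq_from _ _ (lbound f + lbound g)).
- exact: lmul_vanishes.
- by apply: lscale_vanishes; apply: lmul_vanishes.
move=> i; rewrite (lmul_coef lcf lg hca hb) /lscale (lmul_coef lf lg ha hb).
by rewrite mulr_sumr; apply: eq_bigr => j _; rewrite mulrA.
Qed.

Lemma lmulZr c f g : is_laurent f -> is_laurent g ->
  lmul f (lscale c g) = lscale c (lmul f g).
Proof.
by move=> lf lg; rewrite lmulC ?lmulZl ?(lmulC lf) //; apply: lscale_laurent.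
Qed.

Lemma lmul_lmonol m f : is_laurent f -> lmul (lmono m) f = fun n => f (n - m).
Proof.
move=> lf; have ha := lbound_vanishes lf.
apply: (@laurent_eq_from _ _ (m + lbound f)).
- by apply: lmul_vanishes => //; [apply: lmono_laurent | apply: lmono_vanishes].
- by move=> n hn; apply: ha; lia.
move=> i; rewrite (lmul_coef (@lmono_laurent m) lf (@lmono_vanishes m) ha).
rewrite big_ord_recl /= /lmono addr0 eqxx mul1r big1 ?addr0.
  by congr f; rewrite subn0; lia.
by move=> j _; case: eqP; rewrite ?mul0r // /bump /=; lia.
Qed.

Lemma lmul_lmono a b : lmul (lmono a) (lmono b) = lmono (a + b).
Proof.
rewrite lmul_lmonol; last exact: lmono_laurent.
apply: functional_extensionality => n; rewrite /lmono.
by case: eqP => e; case: eqP => e' //; lia.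
Qed.

Lemma lmul1 f : is_laurent f -> lmul (lone K) f = f.
Proof.
move=> lf; rewrite loneE lmul_lmonol //.
by apply: functional_extensionality => n; rewrite subr0.
Qed.

Lemma lmul0 f : lmul f (lzero K) = lzero K.
Proof.
apply: functional_extensionality => n; rewrite /lmul.
by case: ifP => // _; rewrite big1 // => i _; rewrite mulr0.
Qed.

Lemma loppE f : lopp f = lscale (-1) f.
Proof. by apply: functional_extensionality => n; rewrite /lopp /lscale mulN1r. Qed.

Lemma lscaleA c d f : lscale c (lscale d f) = lscale (c * d) f.
Proof. by apply: functional_extensionality => n; rewrite /lscale mulrA. Qed.

Lemma lscale1 f : lscale 1 f = f.
Proof. by apply: functional_extensionality => n; rewrite /lscale mul1r. Qed.

Lemma lsumE n (F : 'I_n -> laurent K) k :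
  (\big[@ladd K/lzero K]_(i < n) F i) k = \sum_(i < n) F i k.
Proof. exact: (big_morph (fun f : laurent K => f k)). Qed.

Definition ltrunc (N : int) f : laurent K := fun n => if n <= N then f n else 0.

Lemma ltrunc_lsum f A N : vanishes_below f A -> A <= N ->
  ltrunc N f = \big[@ladd K/lzero K]_(i < (absz (N - A)%R).+1)
                 lscale (f (A + i%:Z)) (lmono (A + i%:Z)).
Proof.
move=> hA hAN; apply: functional_extensionality => n; rewrite lsumE /lscale.
transitivity (zsum A N (fun t => f t * lmono t n)); last by rewrite /zsum ifT.
have mono0 t : t != n -> f t * lmono t n = 0.
  by move=> htn; rewrite /lmono eq_sym (negbTE htn) mulr0.
rewrite /ltrunc; case: ifP => hn.
  rewrite (@zsum_eq A N n n (fun t => f t * lmono t n)).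
  - by rewrite /zsum lexx subrr big_ord1 addr0 /lmono eqxx mulr1.
  - by move=> t [] ht; [rewrite hA ?mul0r | apply: mono0; apply/eqP; lia].
  - by move=> t ht; apply: mono0; apply/eqP; lia.
rewrite /zsum ifT // big1 // => i _; apply: mono0; apply/eqP.
by have := ltn_ord i; lia.
Qed.

Lemma lsum_laurent n (F : 'I_n -> laurent K) :
  (forall i, is_laurent (F i)) -> is_laurent (\big[@ladd K/lzero K]_(i < n) F i).
Proof.
elim: n F => [|n IH] F H; first by rewrite big_ord0; apply: lzero_laurent.
by rewrite big_ord_recl; apply: ladd_laurent => //; apply: IH.
Qed.

Lemma lderiv_vanishes f A : vanishes_below f A -> vanishes_below (lderiv f) (A - 1).
Proof. by move=> hf n hn; rewrite /lderiv hf ?mulr0 //; lia. Qed.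

Lemma lderiv_laurent f : is_laurent f -> is_laurent (lderiv f).
Proof. by move=> [A hA]; exists (A - 1); apply: lderiv_vanishes. Qed.

Lemma lderivD f g : lderiv (ladd f g) = ladd (lderiv f) (lderiv g).
Proof. by apply: functional_extensionality => n; rewrite /lderiv /ladd mulrDr. Qed.

Lemma lderivZ c f : lderiv (lscale c f) = lscale c (lderiv f).
Proof. by apply: functional_extensionality => n; rewrite /lderiv /lscale mulrCA. Qed.

Lemma lderiv0 : lderiv (lzero K) = lzero K.
Proof. by apply: functional_extensionality => n; rewrite /lderiv /lzero mulr0. Qed.

Lemma lderiv1 : lderiv (lone K) = lzero K.
Proof.
apply: functional_extensionality => n; rewrite /lderiv /lone /lzero.
by case: eqP => [->|_]; rewrite ?mulr1 ?mulr0.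
Qed.

Lemma lderiv_lx : lderiv (lx K) = lone K.
Proof.
apply: functional_extensionality => n; rewrite /lderiv /lone /lx.
have -> : (n + 1 == 1) = (n == 0) by apply/eqP/eqP; lia.
by case: eqP => [->|_]; rewrite ?add0r ?mulr1 ?mulr0.
Qed.

Lemma lderivM f g : is_laurent f -> is_laurent g ->
  lderiv (lmul f g) = ladd (lmul (lderiv f) g) (lmul f (lderiv g)).
Proof.
move=> lf lg; have ha := lbound_vanishes lf; have hb := lbound_vanishes lg.
set A := lbound f in ha *; set B := lbound g in hb *.
have lf' := lderiv_laurent lf; have lg' := lderiv_laurent lg.
have ha' := lderiv_vanishes ha; have hb' := lderiv_vanishes hb.
apply: (@laurent_eq_from _ _ (A + B - 1)).
- exact: lderiv_vanishes (lmul_vanishes lf lg ha hb).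
- apply: ladd_vanishes.
  + by apply: (vanishes_below_le (lmul_vanishes lf' lg ha' hb)); lia.
  + by apply: (vanishes_below_le (lmul_vanishes lf lg' ha hb')); lia.
move=> i; rewrite {1}/lderiv.
have -> : A + B - 1 + i%:Z + 1 = A + B + i%:Z by lia.
rewrite (lmul_coef lf lg ha hb) /ladd.
have -> : A + B - 1 + i%:Z = A - 1 + B + i%:Z by lia.
rewrite (lmul_coef lf' lg ha' hb).
have -> : A - 1 + B + i%:Z = A + (B - 1) + i%:Z by lia.
rewrite (lmul_coef lf lg' ha hb') -big_split mulr_sumr /=.
apply: eq_bigr => j _; rewrite /lderiv.
have -> : A - 1 + j%:Z + 1 = A + j%:Z by lia.
have -> : B - 1 + (i - j)%N%:Z + 1 = B + (i - j)%N%:Z by lia.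
have -> : A + B + i%:Z = (A + j%:Z) + (B + (i - j)%N%:Z) by have := ltn_ord j; lia.
by rewrite intrD; ring.
Qed.

End LaurentArithmetic.

Lemma sum_pascal (R : pzSemiRingType) n (T : nat -> nat -> R) :
  \sum_(i < n.+1) 'C(n, i)%:R * (T i.+1 (n - i)%N + T i (n - i).+1) =
  \sum_(i < n.+2) 'C(n.+1, i)%:R * T i (n.+1 - i)%N.
Proof.
have shift : \sum_(i < n.+1) 'C(n, i)%:R * T i (n - i).+1 =
    T 0%N n.+1 + \sum_(i < n.+1) 'C(n, i.+1)%:R * T i.+1 (n - i)%N.
  rewrite big_ord_recl bin0 subn0 mul1r; congr (_ + _).
  rewrite big_ord_recr /= bin_small // mul0r addr0.
  apply: eq_bigr => i _; rewrite /bump leq0n add1n.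
  by congr (_ * T _ _); have := ltn_ord i; lia.
rewrite [RHS]big_ord_recl bin0 subn0 mul1r.
under eq_bigr => i _ do rewrite mulrDr.
rewrite big_split /= shift.
under [X in _ = _ + X]eq_bigr => i _ do rewrite /bump leq0n add1n binS natrD mulrDl subSS.
by rewrite big_split /= addrCA; congr (_ + _); apply: addrC.
Qed.

Section Derivation.
Variables (K : fieldType) (p : laurent K).
Hypothesis lp : is_laurent p.
Implicit Types (f g h : laurent K).

Definition pder g := lmul p (lderiv g).

Lemma pder_vanishes g B : is_laurent g -> vanishes_below g B ->
  vanishes_below (pder g) (lbound p + (B - 1)).
Proof.
move=> lg hg; apply: lmul_vanishes => //.
- exact: lderiv_laurent.
- exact: lbound_vanishes.
- exact: lderiv_vanishes.
Qed.

Lemma pder_laurent g : is_laurent g -> is_laurent (pder g).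
Proof. by move=> lg; apply: lmul_laurent => //; apply: lderiv_laurent. Qed.

Lemma pderD g h : is_laurent g -> is_laurent h ->
  pder (ladd g h) = ladd (pder g) (pder h).
Proof. by move=> lg lh; rewrite /pder lderivD lmulDr //; apply: lderiv_laurent. Qed.

Lemma pderZ c g : is_laurent g -> pder (lscale c g) = lscale c (pder g).
Proof. by move=> lg; rewrite /pder lderivZ lmulZr //; apply: lderiv_laurent. Qed.

Lemma pder0 : pder (lzero K) = lzero K.
Proof. by rewrite /pder lderiv0 lmul0. Qed.

Lemma pder1 : pder (lone K) = lzero K.
Proof. by rewrite /pder lderiv1 lmul0. Qed.

Lemma pderM f g : is_laurent f -> is_laurent g ->
  pder (lmul f g) = ladd (lmul (pder f) g) (lmul f (pder g)).
Proof.
move=> lf lg; have lf' := lderiv_laurent lf; have lg' := lderiv_laurent lg.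
rewrite /pder lderivM // lmulDr //; try by apply: lmul_laurent.
by rewrite -(lmulA lp lf' lg) -(lmulA lp lf lg') (lmulC lp lf) (lmulA lf lp lg').
Qed.

Lemma pder_lsum n (F : 'I_n -> laurent K) : (forall i, is_laurent (F i)) ->
  pder (\big[@ladd K/lzero K]_(i < n) F i) = \big[@ladd K/lzero K]_(i < n) pder (F i).
Proof.
elim: n F => [|n IH] F H; first by rewrite !big_ord0 pder0.
by rewrite !big_ord_recl pderD ?IH //; apply: lsum_laurent.
Qed.

Lemma iter_pder_laurent n g : is_laurent g -> is_laurent (iter n pder g).
Proof. by move=> lg; elim: n => //= n IH; apply: pder_laurent. Qed.

Lemma iter_pderD n g h : is_laurent g -> is_laurent h ->
  iter n pder (ladd g h) = ladd (iter n pder g) (iter n pder h).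
Proof.
by move=> lg lh; elim: n => //= n ->; rewrite pderD //; apply: iter_pder_laurent.
Qed.

Lemma iter_pderZ n c g : is_laurent g ->
  iter n pder (lscale c g) = lscale c (iter n pder g).
Proof. by move=> lg; elim: n => //= n ->; rewrite pderZ //; apply: iter_pder_laurent. Qed.

Lemma iter_pder_lsum n m (F : 'I_m -> laurent K) : (forall i, is_laurent (F i)) ->
  iter n pder (\big[@ladd K/lzero K]_(i < m) F i) =
  \big[@ladd K/lzero K]_(i < m) iter n pder (F i).
Proof.
move=> HF; elim: n => //= n ->.
by rewrite pder_lsum // => i; apply: iter_pder_laurent.
Qed.

Lemma iter_pder_vanishes n g B : is_laurent g -> vanishes_below g B ->
  vanishes_below (iter n pder g) (B + n%:Z * (lbound p - 1)).
Proof.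
move=> lg hg; elim: n => [|n IH] /=; first by rewrite mul0r addr0.
have := pder_vanishes (iter_pder_laurent n lg) IH.
by have -> : lbound p + (B + n%:Z * (lbound p - 1) - 1) =
  B + n.+1%:Z * (lbound p - 1) by lia.
Qed.

Lemma iter_pder1 n : iter n.+1 pder (lone K) = lzero K.
Proof. by elim: n => [|n IH]; rewrite iterS ?pder1 // IH pder0. Qed.

Lemma iter_pderM n f g : is_laurent f -> is_laurent g ->
  iter n pder (lmul f g) = \big[@ladd K/lzero K]_(i < n.+1)
     lscale 'C(n, i)%:R (lmul (iter i pder f) (iter (n - i) pder g)).
Proof.
move=> lf lg; elim: n => [|n IH].
  rewrite big_ord_recl big_ord0; apply: functional_extensionality => k.
  by rewrite /ladd /lscale /lzero addr0 /= mul1r.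
rewrite [LHS]/= IH pder_lsum; last first.
  by move=> i; apply: lscale_laurent; apply: lmul_laurent; apply: iter_pder_laurent.
apply: functional_extensionality => k; rewrite !lsumE.
rewrite [in RHS]/lscale.
rewrite -(sum_pascal n (fun a b => lmul (iter a pder f) (iter b pder g) k)).
apply: eq_bigr => i _.
rewrite pderZ; last by apply: lmul_laurent; apply: iter_pder_laurent.
by rewrite pderM ?/lscale ?/ladd //=; apply: iter_pder_laurent.
Qed.

(* D^j lowers the x-adic order by at most j (1 - lbound p), so only finitely
   many monomials of f contribute to a given coefficient of D^j f. *)
Lemma iter_pder_expand j f k : is_laurent f -> exists N0 : nat, forall M : nat,
  (N0 <= M)%N ->
  \sum_(i < (2 * M).+1) f (i%:Z - M%:Z) * iter j pder (lmono K (i%:Z - M%:Z)) k =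
  iter j pder f k.
Proof.
move=> lf; have hA := lbound_vanishes lf; set A := lbound f in hA.
set jc := j%:Z * (lbound p - 1).
set N := Num.max A (k - jc).
have hAN : A <= N by rewrite le_max lexx.
have hkN : k - jc <= N by rewrite le_max lexx orbT.
set F := fun t => f t * iter j pder (lmono K t) k.
have HF t : t < A \/ N < t -> F t = 0.
  case=> ht; first by rewrite /F hA // mul0r.
  rewrite /F (iter_pder_vanishes (n := j) (@lmono_laurent K t) (@lmono_vanishes K t)).
    by rewrite mulr0.
  by rewrite -/jc; lia.
exists (absz A + absz N)%N => M hM.
have -> : \sum_(i < (2 * M).+1) f (i%:Z - M%:Z) * iter j pder (lmono K (i%:Z - M%:Z)) k
    = zsum (- M%:Z) M%:Z F.
  rewrite /zsum ifT; last lia.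
  have -> : absz (M%:Z - - M%:Z)%R = (2 * M)%N by lia.
  by apply: eq_bigr => i _; rewrite /F addrC.
rewrite (zsum_widen HF); [|lia|lia].
pose hi n := if n <= N then 0 else f n.
have Ef : f = ladd (ltrunc N f) hi.
  apply: functional_extensionality => n; rewrite /ladd /ltrunc /hi.
  by case: ifP; rewrite ?addr0 ?add0r.
have llo : is_laurent (ltrunc N f) by exists A => n hn; rewrite /ltrunc hA //; case: ifP.
have shi : vanishes_below hi (N + 1).
  by move=> n hn; rewrite /hi; case: ifP => // h; lia.
have lhi : is_laurent hi by exists (N + 1).
rewrite Ef iter_pderD // /ladd.
rewrite (iter_pder_vanishes (n := j) lhi shi) ?addr0; last by rewrite -/jc; lia.
rewrite (ltrunc_lsum hA hAN) iter_pder_lsum; last first.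
  by move=> i; apply: lscale_laurent; apply: lmono_laurent.
rewrite lsumE /zsum ifT //; apply: eq_bigr => i _.
by rewrite iter_pderZ //; apply: lmono_laurent.
Qed.

Definition exp_der h : lser K := fun j => lscale (j`!%:R)^-1 (iter j pder h).

Lemma exp_der_laurent h j : is_laurent h -> is_laurent (exp_der h j).
Proof. by move=> lh; apply: lscale_laurent; apply: iter_pder_laurent. Qed.

Lemma exp_der0 h : exp_der h 0%N = h.
Proof. by rewrite /exp_der /= invr1 lscale1. Qed.

Lemma exp_der_lx1 : exp_der (lx K) 1%N = p.
Proof.
rewrite /exp_der /= invr1 lscale1 /pder lderiv_lx lmulC ?lmul1 //.
by rewrite loneE; apply: lmono_laurent.
Qed.

End Derivation.

Section SeriesInverse.
Variable K : fieldType.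

Lemma lorder_lx : lorder (lx K) = 1.
Proof.
have ex : exists v : int, lx K v != 0 /\ (forall n : int, n < v -> lx K n = 0).
  exists 1; split; first by rewrite /lx eqxx oner_eq0.
  by move=> n hn; rewrite /lx; case: eqP => // e; lia.
have [H _] := epsilon_spec (inhabits (0 : int)) _ ex.
rewrite /lorder; move: H; set v := epsilon _ _.
by rewrite /lx; case: (v =P 1) => // _; rewrite eqxx.
Qed.

Lemma ps_inv_seq_lx n :
  size (ps_inv_seq (fun i : nat => lx K (1 + i%:Z)) n) = n.+1 /\
  forall i, (i <= n)%N ->
    nth 0 (ps_inv_seq (fun i : nat => lx K (1 + i%:Z)) n) i = if i == 0%N then 1 else 0.
Proof.
elim: n => [|n [IHs IHn]] /=.
  by split => // i; rewrite leqn0 => /eqP ->; rewrite /lx addr0 eqxx invr1.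
rewrite size_rcons IHs; split => // i hi; rewrite nth_rcons IHs.
case: ltnP => hin; first exact: IHn.
have -> : i = n.+1 by apply/eqP; rewrite eqn_leq hi hin.
rewrite eqxx /= big1 ?mulr0 // => k _; rewrite /lx.
by case: eqP => e; [lia | rewrite mul0r].
Qed.

Lemma linv_lx : linv (lx K) = lmono K (-1).
Proof.
apply: functional_extensionality => n; rewrite /linv lorder_lx /lmono /ps_inv.
have [_ H] := ps_inv_seq_lx (absz (n + 1)%R).
case: ifP => hn; last by case: eqP => // e; lia.
by rewrite H //; have -> : (absz (n + 1)%R == 0%N) = (n == -1) by apply/eqP/eqP; lia.
Qed.

Lemma sinv_seq_size (psi : lser K) n : size (sinv_seq psi n) = n.+1.
Proof. by elim: n => //= n IH; rewrite size_rcons IH. Qed.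

Lemma sinv_seq_nth (psi : lser K) n i : (i <= n)%N ->
  nth (lzero K) (sinv_seq psi n) i = sinv psi i.
Proof.
elim: n => [|n IH] hi; first by move: hi; rewrite leqn0 => /eqP ->.
rewrite /= nth_rcons sinv_seq_size.
case: ltnP => hin; first exact: IH.
have -> : i = n.+1 by apply/eqP; rewrite eqn_leq hi hin.
by rewrite eqxx /sinv /= nth_rcons sinv_seq_size ltnn eqxx.
Qed.

Lemma sinv0 (psi : lser K) : sinv psi 0%N = linv (psi 0%N).
Proof. by []. Qed.

Lemma sinvS (psi : lser K) n : sinv psi n.+1 =
  lopp (lmul (linv (psi 0%N))
    (\big[@ladd K/lzero K]_(k < n.+1) lmul (psi k.+1) (sinv psi (n - k)%N))).
Proof.
rewrite {1}/sinv /= nth_rcons sinv_seq_size ltnn eqxx.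
congr (lopp (lmul _ _)); apply: eq_bigr => k _; rewrite sinv_seq_nth //.
exact: leq_subr.
Qed.

(* The z^j-coefficients of all the series built by [smul], [sinv], [spow] and
   [psum] only depend on the z^i-coefficients of the arguments for i <= j. *)
Definition agree (J : nat) (psi chi : lser K) := forall i, (i <= J)%N -> psi i = chi i.

Lemma agree_smul J a b c d : agree J a c -> agree J b d -> agree J (smul a b) (smul c d).
Proof.
move=> hac hbd i hi; rewrite /smul; apply: eq_bigr => l _; have hl := ltn_ord l.
by rewrite hac ?hbd //; [apply: leq_trans (leq_subr _ _) hi | apply: leq_trans hi; lia].
Qed.

Lemma agree_sinv J a c : agree J a c -> agree J (sinv a) (sinv c).
Proof.
move=> h i; elim/ltn_ind: i => -[|n] IH hi; first by rewrite !sinv0 h.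
rewrite !sinvS h //; congr (lopp (lmul _ _)); apply: eq_bigr => l _.
by have hl := ltn_ord l; rewrite h ?IH //; lia.
Qed.

Lemma agree_spow J a c m : agree J a c -> agree J (spow a m) (spow c m).
Proof.
have agree_iter b d n : agree J b d ->
    agree J (iter n (smul b) (sone K)) (iter n (smul d) (sone K)).
  by move=> h; elim: n => //= n IH; apply: agree_smul.
by move=> h; rewrite /spow; case: ifP => _; apply: agree_iter => //; apply: agree_sinv.
Qed.

Lemma agree_psum J a c f M j k : agree J a c -> (j <= J)%N ->
  psum f a M j k = psum f c M j k.
Proof.
by move=> h hj; rewrite /psum; apply: eq_bigr => i _; rewrite (agree_spow _ h).
Qed.

End SeriesInverse.

Section CharacteristicZero.
Variable K : fieldType.
Hypothesis Hchar0 : forall n : nat, n.+1%:R != 0 :> K.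

Lemma natr_fact_neq0 n : (n`!)%:R != 0 :> K.
Proof. by have := fact_gt0 n; case: (n`!) => // m _; apply: Hchar0. Qed.

Lemma inv_fact_mul i j : (i <= j)%N ->
  (i`!%:R)^-1 * ((j - i)`!%:R)^-1 = (j`!%:R)^-1 * 'C(j, i)%:R :> K.
Proof.
move=> hij; rewrite -(bin_fact hij) !natrM.
have h1 := natr_fact_neq0 i; have h2 := natr_fact_neq0 (j - i).
have h3 : 'C(j, i)%:R != 0 :> K.
  by have := bin_gt0 j i; rewrite hij; case: ('C(j, i)) => // m _; apply: Hchar0.
by field; rewrite h1 h2 h3.
Qed.

Section ExpDerivation.
Variable p : laurent K.
Hypothesis lp : is_laurent p.

Lemma exp_derM h1 h2 : is_laurent h1 -> is_laurent h2 ->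
  smul (exp_der p h1) (exp_der p h2) = exp_der p (lmul h1 h2).
Proof.
move=> l1 l2; apply: functional_extensionality => j.
apply: functional_extensionality => k.
rewrite /smul lsumE /exp_der {3}/lscale iter_pderM // lsumE mulr_sumr.
apply: eq_bigr => i _.
rewrite lmulZl ?lmulZr; try by apply: iter_pder_laurent.
  rewrite /lscale mulrA inv_fact_mul ?mulrA //.
  by have := ltn_ord i; rewrite ltnS.
by apply: lscale_laurent; apply: iter_pder_laurent.
Qed.

Lemma exp_der1 : exp_der p (lone K) = sone K.
Proof.
apply: functional_extensionality => -[|j]; first by rewrite exp_der0.
rewrite /exp_der iter_pder1 /sone /=.
by apply: functional_extensionality => k; rewrite /lscale /lzero mulr0.
Qed.

Lemma iter_smul_exp_der_lmono (s : int) (n : nat) :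
  iter n (smul (exp_der p (lmono K s))) (sone K) = exp_der p (lmono K (n%:Z * s)).
Proof.
elim: n => [|n IH] /=; first by rewrite mul0r -loneE exp_der1.
rewrite IH exp_derM; try exact: lmono_laurent.
by rewrite lmul_lmono; congr (exp_der p (lmono _ _)); lia.
Qed.

Lemma sinv_exp_der_lx : sinv (exp_der p (lx K)) = exp_der p (lmono K (-1)).
Proof.
apply: functional_extensionality => j; elim/ltn_ind: j => -[|n] IH.
  by rewrite sinv0 !exp_der0 linv_lx.
rewrite sinvS exp_der0 linv_lx.
set e := exp_der p (lmono K (-1)).
have le i : is_laurent (e i) by apply: exp_der_laurent => //; apply: lmono_laurent.
set S := \big[@ladd K/lzero K]_(k < n.+1) _.
have ES : S = \big[@ladd K/lzero K]_(k < n.+1) lmul (exp_der p (lx K) k.+1) (e (n - k)%N).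
  by apply: eq_bigr => k _; rewrite IH // ltnS leq_subr.
(* x * x^-1 = 1 gives, at z^(n+1), x * e_(n+1) + S = 0. *)
have E := exp_derM (@lmono_laurent K 1) (@lmono_laurent K (-1)).
rewrite lmul_lmono -lxE addrN -loneE exp_der1 in E.
have E1 := congr1 (fun F => F n.+1) E; rewrite /smul /sone /= big_ord_recl exp_der0 in E1.
have SE : S = lscale (-1) (lmul (lx K) (e n.+1)).
  apply: functional_extensionality => k.
  have := congr1 (fun F => F k) E1; rewrite ES /ladd /lscale /lzero => /eqP.
  by rewrite addr_eq0 => /eqP ->; rewrite mulN1r opprK.
have lmx : is_laurent (lmono K (-1)) by apply: lmono_laurent.
have lx1 : is_laurent (lx K) by apply: lmono_laurent.
rewrite SE lmulZr //; last exact: lmul_laurent.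
rewrite loppE lscaleA -lmulA //.
by rewrite lxE lmul_lmono addNr -loneE lmul1 // mulN1r opprK lscale1.
Qed.

Lemma spow_exp_der_lx (m : int) : spow (exp_der p (lx K)) m = exp_der p (lmono K m).
Proof.
rewrite /spow; case: ifP => hm.
  by rewrite lxE iter_smul_exp_der_lmono; congr (exp_der p (lmono _ _)); lia.
by rewrite sinv_exp_der_lx iter_smul_exp_der_lmono; congr (exp_der p (lmono _ _)); lia.
Qed.

Lemma psum_exp_der_lx (f : laurent K) j k : is_laurent f -> exists M0 : nat,
  forall M : nat, (M0 <= M)%N -> psum f (exp_der p (lx K)) M j k = exp_der p f j k.
Proof.
move=> lf; have [N0 HN] := iter_pder_expand lp j k lf.
exists N0 => M hM; rewrite /psum.
under eq_bigr => i _ do rewrite spow_exp_der_lx /exp_der /lscale mulrCA.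
by rewrite -mulr_sumr HN.
Qed.

Lemma exp_der_lx_associate : associate (exp_der p (lx K)).
Proof.
have lx1 : is_laurent (lx K) by apply: lmono_laurent.
have lfn n : is_laurent (exp_der p (lx K) n) by apply: exp_der_laurent.
split; first exact: lfn.
split; first by move=> k; rewrite exp_der0.
move=> n j k; have [M0 HM] := psum_exp_der_lx j k (lfn n).
exists M0 => M hM; rewrite HM // /exp_der iter_pderZ //; last exact: iter_pder_laurent.
rewrite -iterD /lscale mulrA mulrA [_^-1 * _^-1]mulrC.
have := inv_fact_mul (leq_addr j n); rewrite addKn => ->.
by rewrite [(j + n)%N]addnC [_^-1 * _]mulrC.
Qed.

End ExpDerivation.

Lemma associate_exp_der (phi : lser K) : associate phi ->
  forall n, phi n = exp_der (phi 1%N) (lx K) n.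
Proof.
move=> [Hl [H0 Hs]]; set p := phi 1%N; have lp : is_laurent p := Hl 1%N.
have lx1 : is_laurent (lx K) by apply: lmono_laurent.
have phi0 : phi 0%N = lx K by apply: functional_extensionality.
have Hag : agree 1 phi (exp_der p (lx K)).
  by case=> [|[|i]] // _; rewrite ?exp_der0 ?exp_der_lx1.
elim=> [|n IH]; first by rewrite exp_der0.
apply: functional_extensionality => k.
have [M1 H1] := Hs n 1%N k.
have [M2 H2] := psum_exp_der_lx lp 1%N k (Hl n).
(* Compare the z-coefficients of f_n(phi) = f_n(e^{zD} x) = e^{zD} f_n. *)
have := H1 (maxn M1 M2) (leq_maxl _ _).
rewrite (agree_psum (phi n) (maxn M1 M2) k Hag) // H2 ?leq_maxr // IH.
rewrite addn1 binSn /exp_der /= invr1 /lscale mul1r => E.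
rewrite pderZ // in E; last exact: iter_pder_laurent.
rewrite /lscale in E; rewrite factS natrM.
apply: (mulfI (Hchar0 n)); rewrite -E.
by field; rewrite natr_fact_neq0 addrC natr1 Hchar0.
Qed.

End CharacteristicZero.

Local Open Scope complex_scope.

Theorem proposition2p4 (R : realType) :
  (forall p : laurent R[i], is_laurent p -> associate (phi_exp p)) /\
  (forall phi : lser R[i], associate phi ->
     (exists p : laurent R[i], is_laurent p /\
        forall (n : nat) (k : int), phi n k = phi_exp p n k) /\
     (forall p : laurent R[i], is_laurent p ->
        (forall (n : nat) (k : int), phi n k = phi_exp p n k) ->
        forall k : int, p k = phi 1%N k)).
Proof.
have Hchar0 (n : nat) : n.+1%:R != 0 :> R[i] by rewrite pnatr_eq0.
have phi_expE (p : laurent R[i]) : phi_exp p = exp_der p (lx R[i]) by [].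
split=> [p lp|phi Hphi]; first by rewrite phi_expE; apply: exp_der_lx_associate.
split=> [|p lp Hp k].
  exists (phi 1%N); split; first exact: Hphi.1.
  by move=> n k; rewrite phi_expE -(associate_exp_der Hchar0 Hphi).
by rewrite Hp phi_expE exp_der_lx1.
Qed.
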